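(* Let $\mathcal{H}$ be a Hilbert space, $h\in\mathcal{H}$, and $\mathcal{L}$ a nonempty set of closed subspaces of $\mathcal{H}$. Define $\mathcal{C}: 2^{\mathcal{L}}\to 2^{\mathcal{L}}$ by: for $A\subseteq\mathcal{L}$ and $b\in\mathcal{L}$, $b\in\mathcal{C}(A)$ iff $A^*_p(h)\in b$. Then $\mathcal{C}$ is an L-logics, i.e. it satisfies Inclusion ($A\subseteq\mathcal{C}(A)$ for all $A\subseteq\mathcal{L}$) and Loop: for every $n\ge 1$ and all $A_0,\dots,A_{n-1}\subseteq\mathcal{L}$, if $A_i\subseteq\mathcal{C}(A_{i+1})$ for every $i=0,\dots,n-1$ (indices modulo $n$), then $\mathcal{C}(A_0)=\mathcal{C}(A_1)$.
   Context: For $A\subseteq\mathcal{L}$, $A^* = \bigcap_{a\in A} a$ (a closed subspace of $\mathcal{H}$; $A^*=\mathcal{H}$ when $A=\emptyset$), and $A^*_p$ denotes the orthogonal projection onto $A^*$, so $A^*_p(h)$ is the element of $A^*$ closest to $h$. *)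

From HB Require Import structures.
From mathcomp Require Import all_boot all_order all_algebra.
From mathcomp Require Import all_classical all_reals topology normedtype.
Set Implicit Arguments. Unset Strict Implicit. Unset Printing Implicit Defensive.
Import Order.TTheory GRing.Theory Num.Theory.
Import numFieldNormedType.Exports.
Local Open Scope classical_set_scope.
Local Open Scope ring_scope.

Definition hilbert_norm (R : realType) (V : completeNormedModType R) : Prop :=
  exists ip : V -> V -> R,
    [/\ (forall x y, ip x y = ip y x),
        (forall (a : R) (x y z : V), ip (a *: x + y) z = a * ip x z + ip y z)
      & (forall x, ip x x = `|x| ^+ 2)].

Definition closed_subspace (R : realType) (V : completeNormedModType R)
  (a : set V) : Prop :=
  [/\ closed a, a 0,
      (forall x y, a x -> a y -> a (x + y))
    & (forall (k : R) x, a x -> a (k *: x))].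

(* A^* = intersection of the members of A (= whole space if A is empty) *)
Definition Astar (V : Type) (A : set (set V)) : set V :=
  \bigcap_(a in A) a.

(* orthogonal projection onto S: the element of S closest to h *)
Definition proj (R : realType) (V : completeNormedModType R)
  (S : set V) (h : V) : V :=
  xget 0 [set p | S p /\ forall q, S q -> `|h - p| <= `|h - q|].

Definition Cop (R : realType) (V : completeNormedModType R)
  (L : set (set V)) (h : V) (A : set (set V)) : set (set V) :=
  [set b | L b /\ b (proj (Astar A) h)].

From Pilot Require Import Defs.
From HB Require Import structures.
From mathcomp Require Import all_boot all_order all_algebra.
From mathcomp Require Import all_classical all_reals topology normedtype sequences.
From mathcomp Require Import ring lra zify.
Set Implicit Arguments. Unset Strict Implicit. Unset Printing Implicit Defensive.
Import Order.TTheory GRing.Theory Num.Theory.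
Import numFieldNormedType.Exports.
Local Open Scope classical_set_scope.
Local Open Scope ring_scope.

(** The projection theorem: by the parallelogram law, the squared distance
   between two points of a convex set S is at most twice the sum of their
   squared distances to h minus four times the infimum of the squared distances
   from h to S.  Hence a minimizing sequence is Cauchy, its limit is a nearest
   point when S is closed, and this nearest point is unique.  For the loop
   property, A_i ⊆ C(A_(i+1)) says that the projection p_(i+1) of h onto
   A_(i+1)^* lies in A_i^*, so |h - p_i| <= |h - p_(i+1)|; around the cycle
   this gives |h - p_1| <= |h - p_0| with p_1 in A_0^*, and uniqueness of the
   nearest point forces p_1 = p_0. *)

Section NearestPoint.
Variables (R : realType) (V : completeNormedModType R).
Hypothesis HV : hilbert_norm V.

Lemma parallelogram (x y : V) :
  `|x + y| ^+ 2 + `|x - y| ^+ 2 = 2 * `|x| ^+ 2 + 2 * `|y| ^+ 2.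
Proof.
case: HV => ip [ipC ipDZl ip_norm].
have ip0l z : ip 0 z = 0.
  by have := ipDZl 1 0 0 z; rewrite scale1r addr0 mul1r; lra.
have ipDl a b z : ip (a + b) z = ip a z + ip b z.
  by rewrite -[a]scale1r ipDZl mul1r scale1r.
have ipNl a z : ip (- a) z = - ip a z.
  by rewrite -[- a]addr0 -scaleN1r ipDZl ip0l addr0 mulN1r.
have ipDr a b z : ip z (a + b) = ip z a + ip z b by rewrite ipC ipDl !(ipC z).
have ipNr a z : ip z (- a) = - ip z a by rewrite ipC ipNl ipC.
by rewrite -!ip_norm !(ipDl, ipDr, ipNl, ipNr) (ipC y x); ring.
Qed.

Definition midpoint_convex (S : set V) :=
  forall x y, S x -> S y -> S (2^-1 *: (x + y)).

Definition nearest_point (S : set V) (h p : V) :=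
  S p /\ forall q, S q -> `|h - p| <= `|h - q|.

Variables (S : set V) (h : V).
Hypothesis S_convex : midpoint_convex S.

Lemma convex_sqr_normB_le (D : R) (x y : V) : (forall m, S m -> D <= `|h - m| ^+ 2) ->
  S x -> S y ->
  `|x - y| ^+ 2 <= 2 * `|h - x| ^+ 2 + 2 * `|h - y| ^+ 2 - 4 * D.
Proof.
move=> D_lb Sx Sy.
have := parallelogram (h - x) (h - y).
have -> : h - x + (h - y) = 2 *: (h - 2^-1 *: (x + y)).
  by rewrite scalerBr scalerA mulfV ?pnatr_eq0 // scale1r scaler_nat mulr2n opprD addrACA.
have -> : h - x - (h - y) = - (x - y) by rewrite opprB addrC opprB addrA subrK.
rewrite normrN normrZ ger0_norm // exprMn.
have := D_lb _ (S_convex Sx Sy); lra.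
Qed.

Lemma nearest_point_unique p y : nearest_point S h p -> S y ->
  `|h - y| <= `|h - p| -> y = p.
Proof.
move=> [Sp p_min] Sy le_yp.
have p_lb m : S m -> `|h - p| ^+ 2 <= `|h - m| ^+ 2.
  by move=> Sm; rewrite ler_sqr ?nnegrE // p_min.
have := convex_sqr_normB_le p_lb Sy Sp; rewrite -ler_sqr ?nnegrE // in le_yp.
move=> le_yp2; apply/eqP; rewrite -subr_eq0 -normr_eq0 -sqrf_eq0 eq_le sqr_ge0 andbT.
lra.
Qed.

Lemma cvgn_sqr_normB_le (u : V ^nat) (e : R ^nat) : e @ \oo --> 0 ->
  (forall n m, `|u n - u m| ^+ 2 <= e n + e m) -> cvgn u.
Proof.
move=> e0 u_bound; apply: cauchy_cvg; apply: cauchy_exP => eps eps_gt0.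
have eps2_gt0 : 0 < eps ^+ 2 / 2 by rewrite divr_gt0 ?exprn_gt0.
have [N _ e_small] := cvgr_dist_lt _ _ e0 _ eps2_gt0.
exists (u N); exists N => // n /= le_Nn.
rewrite -ball_normE /= -ltr_sqr ?nnegrE ?(ltW eps_gt0) //.
have := e_small N (leqnn N); have := e_small n le_Nn; have := u_bound N n.
rewrite !sub0r !normrN; have := ler_norm (e N); have := ler_norm (e n); lra.
Qed.

Hypotheses (S_closed : closed S) (S_neq0 : S !=set0).

Lemma exists_nearest_point : exists p, nearest_point S h p.
Proof.
pose E := [set `|h - q| ^+ 2 | q in S].
have E_lb : has_lbound E by exists 0 => _ [q _ <-]; exact: sqr_ge0.
have E_neq0 : E !=set0 by case: S_neq0 => q Sq; exists (`|h - q| ^+ 2), q.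
pose D := inf E.
have D_lb m : S m -> D <= `|h - m| ^+ 2 by move=> Sm; apply: ge_inf => //; exists m.
have near_inf n : exists x, S x /\ `|h - x| ^+ 2 < D + harmonic n.
  by have [_ [x Sx <-]] := inf_adherent (harmonic_gt0 n) (conj E_neq0 E_lb); exists x.
have [q q_min] := choice near_inf.
have h2_0 : (fun n => 2 * harmonic n) @ \oo --> (0 : R).
  rewrite -[X in _ --> X](mulr0 (2 : R)).
  by apply: cvgM; [exact: cvg_cst | exact: cvg_harmonic].
have /cvg_ex[p q_p] : cvgn q.
  apply: (cvgn_sqr_normB_le h2_0) => n m.
  have := convex_sqr_normB_le D_lb (q_min n).1 (q_min m).1.
  have := (q_min n).2; have := (q_min m).2; lra.
have Sp : S p.
  by apply: (closed_cvg _ S_closed _ _ q_p); apply: nearW => n; exact: (q_min n).1.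
have p_le_D : `|h - p| ^+ 2 <= D.
  have dist_cvg : (fun n => `|h - q n| ^+ 2) @ \oo --> `|h - p| ^+ 2.
    by apply: cvgM; apply: cvg_norm; apply: cvgB => //; exact: cvg_cst.
  have D_cvg : (fun n => D + harmonic n) @ \oo --> D.
    by rewrite -[X in _ --> X]addr0; apply: cvgD; [exact: cvg_cst | exact: cvg_harmonic].
  by apply: (ler_cvg_to dist_cvg D_cvg); apply: nearW => n; exact/ltW/(q_min n).2.
exists p; split => // m Sm; rewrite -ler_sqr ?nnegrE //.
exact: le_trans p_le_D (D_lb _ Sm).
Qed.

(* Plain [proj] would be the product projection of mathcomp_extra. *)
Lemma projP : nearest_point S h (Defs.proj S h).
Proof.
rewrite /Defs.proj; case: xgetP => // no_nearest.
by have [p /no_nearest] := exists_nearest_point.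
Qed.

End NearestPoint.

Lemma closed_subspace_midpoint_convex (R : realType) (V : completeNormedModType R)
  (S : set V) : closed_subspace S -> midpoint_convex S.
Proof. by case=> _ _ SD SZ x y Sx Sy; apply/SZ/SD. Qed.

Lemma closed_subspace_Astar (R : realType) (V : completeNormedModType R)
  (A : set (set V)) :
  (forall a, A a -> closed_subspace a) -> closed_subspace (Astar A).
Proof.
move=> A_cs; split.
- by apply: closed_bigI => a /A_cs [].
- by move=> a /A_cs [].
- move=> x y Ax Ay a Aa; case: (A_cs a Aa) => _ _ + _.
  by apply; [exact: Ax | exact: Ay].
- by move=> k x Ax a Aa; case: (A_cs a Aa) => _ _ _; apply; exact: Ax.
Qed.

Section CyclicChain.
Local Open Scope nat_scope.

Lemma le_cycle_head d (T : porderType d) (n : nat) (f : nat -> T) :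
  (forall i, (i < n) -> (f i <= f (i.+1 %% n))%O) ->
  forall i, (i < n) -> (f i <= f 0)%O.
Proof.
move=> f_le i lt_in.
suff f_le_0 k : (k < n) -> (f (n - k.+1) <= f 0)%O.
  by have := f_le_0 (n - i.+1); rewrite (_ : n - (n - i.+1).+1 = i); [apply; lia | lia].
elim: k => [|k IH] lt_kn.
  by have := f_le (n - 1); rewrite subn1 prednK ?modnn; [apply; lia | lia].
apply: le_trans (IH (ltnW lt_kn)); have := f_le (n - k.+2).
by rewrite (_ : (n - k.+2).+1 = n - k.+1) ?modn_small; [apply; lia | lia | lia].
Qed.

End CyclicChain.

Theorem theorem9 (R : realType) (V : completeNormedModType R)
  (HV : hilbert_norm V) (h : V) (L : set (set V))
  (hL0 : L !=set0) (hL : forall a, L a -> closed_subspace a) :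
  (forall A, A `<=` L -> A `<=` Cop L h A) /\
  (forall (n : nat) (As : nat -> set (set V)), (0 < n)%N ->
     (forall i, (i < n)%N -> As i `<=` L) ->
     (forall i, (i < n)%N -> As i `<=` Cop L h (As (i.+1 %% n)%N)) ->
     Cop L h (As 0%N) = Cop L h (As (1 %% n)%N)).
Proof.
have Astar_cs A : A `<=` L -> closed_subspace (Astar A).
  by move=> AL; apply: closed_subspace_Astar => a /AL /hL.
have convex A AL := closed_subspace_midpoint_convex (Astar_cs A AL).
have nearest A (AL : A `<=` L) : nearest_point (Astar A) h (Defs.proj (Astar A) h).
  have [cl A0 _ _] := Astar_cs A AL.
  by apply: (projP HV h (convex A AL) cl); exists 0.
split=> [A AL b Ab | n As n_gt0 AsL AsC].
  by split; [exact: AL | exact: (nearest A AL).1].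
pose p i := Defs.proj (Astar (As i)) h.
have p_next i : (i < n)%N -> Astar (As i) (p (i.+1 %% n)%N).
  by move=> lt_in b /(AsC i lt_in) [].
have p_le_next i (lt_in : (i < n)%N) : `|h - p i| <= `|h - p (i.+1 %% n)%N|.
  exact: (nearest _ (AsL i lt_in)).2 _ (p_next i lt_in).
have p1_le_p0 : `|h - p (1 %% n)%N| <= `|h - p 0%N|.
  exact: @le_cycle_head _ _ n (fun i => `|h - p i|) p_le_next _ (ltn_pmod 1 n_gt0).
have p1_eq_p0 : p (1 %% n)%N = p 0%N.
  exact: (nearest_point_unique HV (convex _ (AsL 0%N n_gt0)) (nearest _ (AsL 0%N n_gt0))
    (p_next 0%N n_gt0) p1_le_p0).
by move: p1_eq_p0; rewrite /p /Cop => ->.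
Qed.
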